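(* Consider a single-core non-preemptive server of capacity $f>0$ and tasks $1,\dots,N$, all available at time $0$, task $a$ requiring $\alpha_a$ CPU cycles with deadline $\beta_a$. Let $\mathbf{s}$ be an optimal ordered set without outage and let $\mathbf{s}'=[s'(1),\dots,s'(P)]$ be the ordered set produced by the Optimal Job Scheduling algorithm. If there exists an index $i\in[1,P]$ such that $\alpha_{s(i)}<\alpha_{s'(i)}$ and $\beta_{s(i)}>\beta_{s'(i)}$, and $s(k)=s'(k)$ for all $k\in[1:i-1]$, then $s(i)\in\mathbf{s}'$.
   Context: An ordered set is a sequence of distinct tasks executed back-to-back from time $0$; the task in position $l$ completes at $\frac1f\sum_{k=1}^{l}\alpha_{s(k)}$ and is in outage if this exceeds its deadline. An optimal ordered set is an ordered set with no outage of maximum cardinality. Optimal Job Scheduling algorithm: let $\mathbf{c}=[c(1),\dots,c(N)]$ be the ordering of $[1:N]$ by nondecreasing $\alpha$ (ties broken by nonincreasing $\beta$) and $\mathbf{b}=[b(1),\dots,b(N)]$ the ordering of $[1:N]$ by nondecreasing $\beta$ (ties broken by nondecreasing $\alpha$). Initialize $\mathbf{q}=[q(1),\dots,q(N)]=\mathbf 0$ (entry $0$ denotes an empty slot, with $\alpha_0=0$). For $i=1,\dots,N$: find $i^*$ with $b(i^* )=c(i)$ and set $q(i^* )\gets b(i^* )$; if for some $j\in[i^*:N]$ with $q(j)\neq0$ we have $\sum_{k=1}^{j}\alpha_{q(k)}/f>\beta_{q(j)}$, reset $q(i^* )\gets0$. The output $\mathbf{s}'$ is the sequence of nonzero entries of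 $\mathbf{q}$ in order, of length $P$. *)

(* Tasks are the naturals 1..N; 0 denotes an empty slot. *)
From mathcomp Require Import all_boot all_order all_algebra.
Set Implicit Arguments. Unset Strict Implicit. Unset Printing Implicit Defensive.
Import Order.TTheory GRing.Theory Num.Theory.
Local Open Scope ring_scope.

Section Sched.
Variable R : realFieldType.
Variables (N : nat) (f : R) (alpha beta : nat -> R).

Definition alpha0 (a : nat) : R := if a == 0%N then 0 else alpha a.

Definition ordered_set (s : seq nat) : bool :=
  uniq s && all (fun a => (0 < a <= N)%N) s.

(* completion time of the task in position l (0-indexed) *)
Definition completion (s : seq nat) (l : nat) : R :=
  (\sum_(k < l.+1) alpha (nth 0%N s k)) / f.

Definition no_outage (s : seq nat) : Prop :=
  forall l, (l < size s)%N -> completion s l <= beta (nth 0%N s l).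

Definition optimal_ordered_set (s : seq nat) : Prop :=
  ordered_set s /\ no_outage s /\
  forall t, ordered_set t -> no_outage t -> (size t <= size s)%N.

Definition c_rel : rel nat :=
  fun x y => (alpha x < alpha y) || ((alpha x == alpha y) && (beta y <= beta x)).
Definition b_rel : rel nat :=
  fun x y => (beta x < beta y) || ((beta x == beta y) && (alpha x <= alpha y)).

Definition is_c_order (c : seq nat) : Prop :=
  perm_eq c (iota 1 N) /\ sorted c_rel c.
Definition is_b_order (b : seq nat) : Prop :=
  perm_eq b (iota 1 N) /\ sorted b_rel b.

Definition ojs_step (b : seq nat) (q : seq nat) (x : nat) : seq nat :=
  let istar := index x b in
  let q' := set_nth 0%N q istar x in
  if has (fun j => (nth 0%N q' j != 0%N) &&
                   (beta (nth 0%N q' j) <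
                      (\sum_(k < j.+1) alpha0 (nth 0%N q' k)) / f))
         (iota istar (N - istar))
  then q else q'.

Definition ojs_q (c b : seq nat) : seq nat := foldl (ojs_step b) (nseq N 0%N) c.

Definition ojs (c b : seq nat) : seq nat := [seq a <- ojs_q c b | a != 0%N].

End Sched.

From mathcomp Require Import all_boot all_order all_algebra.
From mathcomp Require Import lra.
Set Implicit Arguments. Unset Strict Implicit. Unset Printing Implicit Defensive.
Import Order.TTheory GRing.Theory Num.Theory.
Local Open Scope ring_scope.

(* Otherwise x was rejected from some state qx of
   q, while y, coming after x in c, was accepted later from a state qy that
   keeps every task of qx, into a slot of b no later than that of x.  Rejecting
   x exhibits a slot j after that of x with load(qx, j) + alpha x above
   f * beta(b j).  Accepting y bounds load(qy, j) + alpha y by f * beta(b j) at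
   every slot j after its own, empty slots included since deadlines are
   nondecreasing along b.  As load(qx, j) <= load(qy, j), alpha y < alpha x. *)

Lemma nth_neq0_mem (q : seq nat) k : nth 0%N q k != 0%N -> nth 0%N q k \in q.
Proof.
move=> nz; apply: mem_nth; rewrite ltnNge; apply: contra nz => qk.
by rewrite nth_default.
Qed.

Lemma mem_perm_iota1 N (s : seq nat) z :
  perm_eq s (iota 1 N) -> (z \in s) = (0 < z <= N)%N.
Proof. by move=> sN; rewrite (perm_mem sN) mem_iota add1n ltnS. Qed.

Section Orders.
Variables (R : realFieldType) (alpha beta : nat -> R).

Lemma b_rel_refl : reflexive (b_rel alpha beta).
Proof. by move=> x; rewrite /b_rel eqxx lexx orbT. Qed.

Lemma b_rel_trans : transitive (b_rel alpha beta).
Proof.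
move=> y x z; rewrite /b_rel.
move=> /orP[lt1|/andP[/eqP e1 le1]] /orP[lt2|/andP[/eqP e2 le2]]; apply/orP.
- by left; exact: lt_trans lt2.
- by left; rewrite -e2.
- by left; rewrite e1.
- by right; rewrite e1 e2 eqxx (le_trans le1 le2).
Qed.

Lemma b_rel_beta x y : b_rel alpha beta x y -> beta x <= beta y.
Proof. by case/orP => [/ltW //|/andP[/eqP -> _]]. Qed.

Lemma c_rel_trans : transitive (c_rel alpha beta).
Proof.
move=> y x z; rewrite /c_rel.
move=> /orP[lt1|/andP[/eqP e1 le1]] /orP[lt2|/andP[/eqP e2 le2]]; apply/orP.
- by left; exact: lt_trans lt2.
- by left; rewrite -e2.
- by left; rewrite e1.
- by right; rewrite e1 e2 eqxx (le_trans le2 le1).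
Qed.

Lemma c_rel_alpha x y : c_rel alpha beta x y -> alpha x <= alpha y.
Proof. by case/orP => [/ltW //|/andP[/eqP -> _]]. Qed.

End Orders.

Definition respects (b q : seq nat) : Prop :=
  forall k, nth 0%N q k != 0%N -> nth 0%N q k = nth 0%N b k.

Definition keeps (q q' : seq nat) : Prop :=
  forall k, nth 0%N q k != 0%N -> nth 0%N q' k = nth 0%N q k.

Lemma keeps_trans q1 q2 q3 : keeps q1 q2 -> keeps q2 q3 -> keeps q1 q3.
Proof. by move=> k12 k23 k nz; rewrite k23 ?k12. Qed.

Lemma respects_nseq0 b n : respects b (nseq n 0%N).
Proof. by move=> k; rewrite nth_nseq if_same eqxx. Qed.

Lemma respects_mem b q k : respects b q -> nth 0%N q k != 0%N -> nth 0%N q k \in b.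
Proof.
move=> qb nz; have qk := qb k nz; rewrite qk mem_nth // ltnNge.
by apply: contra nz => kb; rewrite qk nth_default.
Qed.

Lemma respects_set b q x :
  respects b q -> x \in b -> respects b (set_nth 0%N q (index x b) x).
Proof.
move=> qb xb k; rewrite nth_set_nth /=.
by case: (k =P index x b) => [->|_]; [rewrite nth_index | exact: qb].
Qed.

Lemma keeps_set b q x :
  respects b q -> x \in b -> keeps q (set_nth 0%N q (index x b) x).
Proof.
move=> qb xb k nz; rewrite nth_set_nth /=.
by case: (k =P index x b) => [ek|//]; rewrite (qb k nz) ek nth_index.
Qed.

Lemma respects_nth_index b q y :
  uniq b -> respects b q -> y \in q -> y != 0%N -> nth 0%N q (index y b) = y.
Proof.
move=> b_uniq qb yq y_neq0; have qy := nth_index 0%N yq.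
set k := index y q in qy; have b_y : nth 0%N b k = y by rewrite -qb qy.
have kb : (k < size b)%N.
  by rewrite ltnNge; apply: contra y_neq0 => kb; rewrite -b_y nth_default.
by rewrite -{1}b_y index_uniq.
Qed.

Section Algorithm.
Variables (R : realFieldType) (N : nat) (f : R) (alpha beta : nat -> R).
Variable b : seq nat.

Local Notation step := (ojs_step N f alpha beta b).

Definition load (q : seq nat) (j : nat) : R :=
  \sum_(k < j.+1) alpha0 alpha (nth 0%N q k).

Definition rejects (q : seq nat) (x : nat) : bool :=
  let q' := set_nth 0%N q (index x b) x in
  has (fun j => (nth 0%N q' j != 0%N) && (beta (nth 0%N q' j) < load q' j / f))
      (iota (index x b) (N - index x b)).

Lemma ojs_stepE q x :
  step q x = if rejects q x then q else set_nth 0%N q (index x b) x.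
Proof. by []. Qed.

Lemma respects_step q x : respects b q -> x \in b -> respects b (step q x).
Proof. by move=> qb xb; rewrite ojs_stepE; case: ifP => // _; apply: respects_set. Qed.

Lemma keeps_step q x : respects b q -> x \in b -> keeps q (step q x).
Proof. by move=> qb xb; rewrite ojs_stepE; case: ifP => // _; apply: keeps_set. Qed.

Lemma respects_foldl q l :
  respects b q -> {subset l <= b} -> respects b (foldl step q l).
Proof.
elim: l q => [//|x l IH] q qb lb /=; apply: IH => [|z zl].
  by apply: respects_step; rewrite // lb ?mem_head.
by apply: lb; rewrite inE zl orbT.
Qed.

Lemma keeps_foldl q l : respects b q -> {subset l <= b} -> keeps q (foldl step q l).
Proof.
elim: l q => [//|x l IH] q qb lb /=.
have xb : x \in b by rewrite lb ?mem_head.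
apply: keeps_trans (keeps_step qb xb) (IH _ (respects_step qb xb) _) => z zl.
by apply: lb; rewrite inE zl orbT.
Qed.

Lemma slot_origin q l k : nth 0%N (foldl step q l) k \in nth 0%N q k :: l.
Proof.
elim: l q => [|x l IH] q /=; first exact: mem_head.
move: (IH (step q x)); rewrite !inE ojs_stepE.
case: ifP => _; last rewrite nth_set_nth /=; last case: (k =P index x b) => _.
all: by case/orP => ->; rewrite ?orbT.
Qed.

Lemma accepted_state q l k y :
  respects b q -> {subset l <= b} -> nth 0%N q k = 0%N ->
  nth 0%N (foldl step q l) k = y -> y != 0%N ->
  exists qy, [/\ respects b qy, keeps q qy, nth 0%N qy k = 0%N & ~~ rejects qy y].
Proof.
elim: l q => [|x l IH] q qb lb qk /= ly y_neq0; first by rewrite -ly qk in y_neq0.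
have xb : x \in b by rewrite lb ?mem_head.
have lb' : {subset l <= b} by move=> z zl; apply: lb; rewrite inE zl orbT.
have [sk|sk] := eqVneq (nth 0%N (step q x) k) 0%N.
  have [qy [qyb kqy qyk acc]] := IH _ (respects_step qb xb) lb' sk ly y_neq0.
  by exists qy; split=> //; apply: keeps_trans kqy; apply: keeps_step.
have := keeps_foldl (respects_step qb xb) lb' sk; rewrite ly.
move: sk; rewrite ojs_stepE; case: ifP => [_|acc]; first by rewrite qk eqxx.
rewrite nth_set_nth /=; case: (k =P index x b) => [_ _ ->|_]; last by rewrite qk eqxx.
by exists q; split=> //; rewrite acc.
Qed.

Lemma load_set q i v j :
  nth 0%N q i = 0%N -> (i <= j)%N ->
  load (set_nth 0%N q i v) j = load q j + alpha0 alpha v.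
Proof.
move=> qi ij; pose i' := Ordinal (ij : (i < j.+1)%N).
rewrite /load (bigD1 i') // [in RHS](bigD1 i') //= !nth_set_nth /= eqxx qi.
rewrite [alpha0 alpha 0]/alpha0 /= add0r addrC.
congr (_ + _); apply: eq_bigr => k; rewrite -val_eqE /= => /negbTE ki.
by rewrite nth_set_nth /= ki.
Qed.

Section BOrder.
Hypothesis alpha_gt0 : forall a, (0 < a <= N)%N -> 0 < alpha a.
Hypothesis b_order : is_b_order N alpha beta b.

Lemma mem_b z : (z \in b) = (0 < z <= N)%N.
Proof. exact: mem_perm_iota1 b_order.1. Qed.

Lemma size_b : size b = N.
Proof. by rewrite (perm_size b_order.1) size_iota. Qed.

Lemma uniq_b : uniq b.
Proof. by rewrite (perm_uniq b_order.1) iota_uniq. Qed.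

Lemma b_neq0 x : x \in b -> x != 0%N.
Proof. by rewrite mem_b -lt0n => /andP[]. Qed.

Lemma alpha0_b x : x \in b -> alpha0 alpha x = alpha x.
Proof. by move/b_neq0 => x_neq0; rewrite /alpha0 (negbTE x_neq0). Qed.

Lemma load_keeps q q' j : respects b q' -> keeps q q' -> load q j <= load q' j.
Proof.
move=> q'b kq; apply: ler_sum => k _.
have [->|nz] := eqVneq (nth 0%N q k) 0%N; last by rewrite kq.
rewrite [alpha0 alpha 0]/alpha0 /= /alpha0; case: ifP => // /negbT q'k.
by apply/ltW/alpha_gt0; rewrite -mem_b respects_mem.
Qed.

Lemma beta_nth_b_le i j : (i <= j)%N -> (j < N)%N -> beta (nth 0%N b i) <= beta (nth 0%N b j).
Proof.
move=> ij jN; apply: b_rel_beta.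
apply: (sorted_leq_nth (@b_rel_trans _ _ _) (@b_rel_refl _ _ _) _ b_order.2);
  by rewrite ?inE /= ?size_b ?(leq_ltn_trans ij).
Qed.

Lemma index_b_le x y : x \in b -> y \in b -> beta y < beta x -> (index y b <= index x b)%N.
Proof.
move=> xb yb lt_beta; rewrite leqNgt; apply/negP => ixy.
have := beta_nth_b_le (ltnW ixy); rewrite !nth_index // -size_b index_mem.
by move=> /(_ yb); rewrite leNgt lt_beta.
Qed.

Section Deadlines.
Hypothesis f_gt0 : 0 < f.

(* An empty slot j inherits the bound of the last occupied slot before it,
   whose deadline in b is at most that of b j. *)
Lemma load_le_deadline q i :
  respects b q -> nth 0%N q i != 0%N ->
  (forall j, (i <= j < N)%N -> nth 0%N q j != 0%N -> load q j / f <= beta (nth 0%N q j)) ->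
  forall j, (i <= j < N)%N -> load q j <= f * beta (nth 0%N b j).
Proof.
move=> qb qi on_time.
have occupied j : (i <= j < N)%N -> nth 0%N q j != 0%N -> load q j <= f * beta (nth 0%N b j).
  by move=> ij nz; rewrite -(qb j nz) mulrC -ler_pdivrMr //; exact: on_time.
elim=> [|j IH] /andP[ij jN].
  by move: ij; rewrite leqn0 => /eqP i0; subst i; apply: occupied; rewrite ?jN.
have [z|nz] := eqVneq (nth 0%N q j.+1) 0%N; last by apply: occupied; rewrite ?ij ?jN.
have {}ij : (i <= j)%N.
  by move: ij; rewrite leq_eqVlt => /predU1P[ei|//]; rewrite ei z eqxx in qi.
rewrite /load big_ord_recr /= z [alpha0 alpha 0]/alpha0 /= addr0 -/(load q j).
apply: le_trans (IH _) _; first by rewrite ij ltnW.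
by rewrite ler_pM2l // beta_nth_b_le.
Qed.

Lemma accepted_load_le q y j :
  respects b q -> y \in b -> nth 0%N q (index y b) = 0%N -> ~~ rejects q y ->
  (index y b <= j < N)%N -> load q j + alpha y <= f * beta (nth 0%N b j).
Proof.
move=> qb yb qy acc /[dup] yj /andP[yj' _].
rewrite -(alpha0_b yb) -(load_set (i := index y b)) //.
apply: load_le_deadline yj; first exact: respects_set.
  by rewrite nth_set_nth /= eqxx b_neq0.
move=> k yk nz; move/hasPn: acc => /(_ k).
rewrite mem_iota subnKC; last by rewrite -size_b index_size.
by move=> /(_ yk); rewrite nz /= -leNgt.
Qed.

Lemma rejected_load_gt q x :
  respects b q -> x \in b -> nth 0%N q (index x b) = 0%N -> rejects q x ->
  exists2 j, (index x b <= j < N)%N & f * beta (nth 0%N b j) < load q j + alpha x.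
Proof.
move=> qb xb qx /hasP[j]; rewrite mem_iota subnKC; last by rewrite -size_b index_size.
move=> /[dup] xj /andP[xj' _] /andP[nz late]; exists j => //.
move: late; rewrite (respects_set qb xb nz) ltr_pdivlMr // mulrC.
by rewrite load_set // alpha0_b.
Qed.

Lemma accepted_lighter_than_rejected qx qy x y :
  respects b qx -> respects b qy -> keeps qx qy -> x \in b -> y \in b ->
  nth 0%N qx (index x b) = 0%N -> nth 0%N qy (index y b) = 0%N ->
  (index y b <= index x b)%N -> rejects qx x -> ~~ rejects qy y -> alpha y < alpha x.
Proof.
move=> qxb qyb kq xb yb qx_x qy_y yx rej acc.
have [j /andP[xj jN] gt] := rejected_load_gt qxb xb qx_x rej.
have le := accepted_load_le qyb yb qy_y acc (j := j).
rewrite (leq_trans yx xj) jN in le.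
have := load_keeps j qyb kq; have := le isT; lra.
Qed.

End Deadlines.

Lemma unscheduled_rejected qx x l :
  respects b qx -> x \in b -> {subset l <= b} -> x \notin foldl step (step qx x) l ->
  nth 0%N qx (index x b) = 0%N /\ rejects qx x.
Proof.
move=> qxb xb lb xQ; have kQ := keeps_foldl (respects_step qxb xb) lb.
have absent k : nth 0%N (step qx x) k != x.
  apply/eqP => ek; have nz : nth 0%N (step qx x) k != 0%N by rewrite ek b_neq0.
  by move: xQ; rewrite -{1}ek -(kQ k nz) nth_neq0_mem // kQ.
split.
  apply/eqP; apply: contraNT (absent (index x b)) => nz.
  by rewrite keeps_step // qxb // nth_index.
apply: contraT => acc; move: (absent (index x b)).
by rewrite ojs_stepE (negbTE acc) nth_set_nth /= !eqxx.
Qed.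

End BOrder.
End Algorithm.

(* positions are 0-indexed: Rocq index i corresponds to the paper's i+1 *)
Theorem lemma2 (R : realFieldType) (N : nat) (f : R) (alpha beta : nat -> R)
  (c b s : seq nat) (i : nat) :
  0 < f ->
  (forall a, (0 < a <= N)%N -> 0 < alpha a) ->
  is_c_order N alpha beta c ->
  is_b_order N alpha beta b ->
  optimal_ordered_set N f alpha beta s ->
  let s' := ojs N f alpha beta c b in
  (i < size s')%N ->
  (i < size s)%N ->
  alpha (nth 0%N s i) < alpha (nth 0%N s' i) ->
  beta (nth 0%N s i) > beta (nth 0%N s' i) ->
  (forall k, (k < i)%N -> nth 0%N s k = nth 0%N s' k) ->
  nth 0%N s i \in s'.
Proof.
move=> f_gt0 alpha_gt0 [c_perm c_sorted] b_order [/andP[_ s_range] _] s' is' is_.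
set x := nth 0%N s i; set y := nth 0%N s' i => lt_alpha gt_beta _.
have xb : x \in b by rewrite (mem_b b_order) (allP s_range) ?mem_nth.
have xc : x \in c by rewrite (mem_perm_iota1 _ c_perm) -(mem_b b_order).
have : y \in s' by exact: mem_nth.
rewrite /s' /ojs mem_filter => /andP[y_neq0 yQ].
apply: contraT; rewrite /s' /ojs mem_filter (b_neq0 b_order xb) /= => xQ.
have cb : {subset c <= b} by move=> z; rewrite (mem_perm_iota1 _ c_perm) (mem_b b_order).
case/splitPr: xc cb c_sorted xQ yQ => c1 c2 cb c_sorted.
rewrite /ojs_q foldl_cat /= => xQ yQ.
have [c1b c2b] : {subset c1 <= b} /\ {subset c2 <= b}.
  by split=> z zc; apply: cb; rewrite mem_cat inE zc ?orbT.
set qx := foldl _ _ c1 in xQ yQ.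
have qxb : respects b qx := respects_foldl (@respects_nseq0 b N) c1b.
have [qx_x rej] := unscheduled_rejected b_order qxb xb c2b xQ.
rewrite ojs_stepE rej in yQ; set Q := foldl _ qx c2 in yQ.
have Qb : respects b Q := respects_foldl qxb c2b.
have Q_y := respects_nth_index (uniq_b b_order) Qb yQ y_neq0.
have yb : y \in b by rewrite -Q_y respects_mem // Q_y.
have qx_y : nth 0%N qx (index y b) = 0%N.
  have := slot_origin N f alpha beta b (nseq N 0%N) c1 (index y b).
  rewrite -/qx nth_nseq if_same inE => /predU1P[//|yc1].
  have [//|nz] := eqVneq (nth 0%N qx (index y b)) 0%N.
  move: yc1; rewrite -(keeps_foldl N f alpha beta qxb c2b nz) -/Q Q_y => yc1.
  have yx : subseq [:: y; x] (c1 ++ x :: c2).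
    by rewrite -[[:: y; x]]cat1s cat_subseq ?sub1seq ?mem_head.
  have /andP[/c_rel_alpha] := subseq_sorted (@c_rel_trans _ _ _) yx c_sorted.
  by rewrite leNgt lt_alpha.
have [qy [qyb kqy qy_y acc]] := accepted_state qxb c2b qx_y Q_y y_neq0.
have := accepted_lighter_than_rejected alpha_gt0 b_order f_gt0 qxb qyb kqy xb yb
          qx_x qy_y (index_b_le b_order xb yb gt_beta) rej acc.
by rewrite ltNge (ltW lt_alpha).
Qed.
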